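(* Let $B$ be a finite skew left brace and $X\subseteq B$ with $|X|\ge3$, $\lambda_a(X)=X$ and $\sigma_a(X)=X$ for all $a\in B$, such that $B$ is additively generated by $X$, the ideal $V$ generated by $\{x-y:x,y\in X\}$ is the smallest non-zero ideal of $B$, $B/V$ is a trivial skew left brace of cyclic type, and $V$ acts transitively on $X$ (the group $\{\sigma_a\lambda_b|_X:a,b\in V\}$ is transitive on $X$). Then $B^{(3)}=0$ if and only if $\lambda_x=\lambda_y$ for all $x,y\in X$. Moreover, if $B^{(3)}=0$ then $\lambda_v=\mathrm{id}$ for every $v\in V$.
   Context: A skew left brace $(B,+,\circ)$: $(B,+)$ and $(B,\circ)$ are groups with $a\circ(b+c)=a\circ b-a+a\circ c$; $\lambda_a(b)=-a+a\circ b$ (an automorphism of $(B,+)$ with $\lambda_{a\circ b}=\lambda_a\lambda_b$), $\sigma_a(b)=-a+b+a$, $a*b=-a+a\circ b-b$. An ideal is a normal subgroup $I$ of $(B,+)$ with $\lambda_a(I)\subseteq I$ for all $a$ and normal in $(B,\circ)$; smallest non-zero ideal = non-zero ideal contained in every non-zero ideal. $I*J$ is the additive subgroup generated by $\{i*j\}$; $B^{(2)}=B*B$, $B^{(3)}=B^{(2)}*B$. $B/V$ is trivial if its two operations coincide, and of cyclic type if its additive group is cyclic. *)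

From HB Require Import structures.
From mathcomp Require Import all_boot.
Set Implicit Arguments. Unset Strict Implicit. Unset Printing Implicit Defensive.

Record skew_brace (T : finType) := SkewBrace {
  add : T -> T -> T;
  zero : T;
  opp : T -> T;
  circ : T -> T -> T;
  one : T;
  cinv : T -> T;
  addA : forall a b c, add a (add b c) = add (add a b) c;
  add0r : forall a, add zero a = a;
  addr0 : forall a, add a zero = a;
  addNr : forall a, add (opp a) a = zero;
  addrN : forall a, add a (opp a) = zero;
  circA : forall a b c, circ a (circ b c) = circ (circ a b) c;
  circ1r : forall a, circ one a = a;
  circr1 : forall a, circ a one = a;
  circVr : forall a, circ (cinv a) a = one;
  circrV : forall a, circ a (cinv a) = one;
  brace_compat : forall a b c,
    circ a (add b c) = add (add (circ a b) (opp a)) (circ a c)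
}.

Section Brace.
Variables (T : finType) (B : skew_brace T).

Definition sub (a b : T) : T := add B a (opp B b).
Definition lambda (a b : T) : T := add B (opp B a) (circ B a b).
Definition sigma (a b : T) : T := add B (add B (opp B a) b) a.
Definition star (a b : T) : T := add B (add B (opp B a) (circ B a b)) (opp B b).
Fixpoint nmul (n : nat) (a : T) : T :=
  if n is k.+1 then add B a (nmul k a) else zero B.

Definition is_add_subgroup (H : {set T}) : bool :=
  [&& zero B \in H,
      [forall a, forall b, (a \in H) && (b \in H) ==> (add B a b \in H)] &
      [forall a, (a \in H) ==> (opp B a \in H)]].

Definition add_gen (S : {set T}) : {set T} :=
  [set x | [forall H : {set T}, is_add_subgroup H && (S \subset H) ==> (x \in H)]].

Definition is_ideal (I : {set T}) : bool :=
  [&& is_add_subgroup I,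
      [forall a, forall i, (i \in I) ==> (add B (add B a i) (opp B a) \in I)],
      [forall a, forall i, (i \in I) ==> (lambda a i \in I)] &
      [forall a, forall i, (i \in I) ==> (circ B (circ B a i) (cinv B a) \in I)]].

Definition ideal_gen (S : {set T}) : {set T} :=
  [set x | [forall I : {set T}, is_ideal I && (S \subset I) ==> (x \in I)]].

Definition smallest_nonzero_ideal (V : {set T}) : bool :=
  [&& is_ideal V, V != [set zero B] &
      [forall J : {set T}, is_ideal J && (J != [set zero B]) ==> (V \subset J)]].

(* B/V trivial: (a+b)+V = (a o b)+V for all a b *)
Definition quotient_trivial (V : {set T}) : bool :=
  [forall a, forall b, add B (opp B (add B a b)) (circ B a b) \in V].

Definition quotient_cyclic_type (V : {set T}) : Prop :=
  exists g : T, forall a : T, exists n : nat, add B (opp B (nmul n g)) a \in V.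

Definition B2 : {set T} := add_gen [set star a b | a in [set: T], b in [set: T]].
Definition B3 : {set T} := add_gen [set star c b | c in B2, b in [set: T]].

End Brace.

From Pilot Require Import Defs.
From mathcomp Require Import all_boot.
Set Implicit Arguments. Unset Strict Implicit. Unset Printing Implicit Defensive.

(* If B^(3) = 0 then every element of B^(2) acts trivially by lambda; this makes
   B^(2) an ideal, so either B^(2) = 0 or it contains the smallest ideal V, and
   in both cases lambda_v = id on V.  Writing x = (x - y) o y then gives
   lambda_x = lambda_y.  Conversely, if lambda is constant on X, then since X is
   lambda-stable and generates (B,+), lambda_{lambda_d b} = lambda_b for all b, d;
   this makes lambda a homomorphism from (B,+), whence lambda_{a*b} =
   lambda_a^-1 lambda_a lambda_b lambda_b^-1 = id, so B^(2) acts trivially and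
   B^(3) = 0. *)

Section SkewBrace.
Variables (T : finType) (B : skew_brace T).
Local Notation "a ⊕ b" := (add B a b) (at level 50, left associativity).
Local Notation "⊖ a" := (opp B a) (at level 35, right associativity).
Local Notation "a ⊙ b" := (circ B a b) (at level 40, left associativity).
Local Notation "a ^-1" := (cinv B a).
Local Notation L := (lambda B).
Local Notation z0 := (zero B).

Lemma addKl a b : ⊖a ⊕ (a ⊕ b) = b.
Proof. by rewrite addA addNr add0r. Qed.

Lemma addNKl a b : a ⊕ (⊖a ⊕ b) = b.
Proof. by rewrite addA addrN add0r. Qed.

Lemma addrK a b : a ⊕ b ⊕ ⊖b = a.
Proof. by rewrite -addA addrN addr0. Qed.

Lemma addrNK a b : a ⊕ ⊖b ⊕ b = a.
Proof. by rewrite -addA addNr addr0. Qed.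

Lemma addIr a : injective (add B^~ a).
Proof. by move=> b c /= e; rewrite -(addrK b a) e addrK. Qed.

Lemma oppr_unique a b : a ⊕ b = z0 -> b = ⊖a.
Proof. by move=> e; rewrite -(addKl a b) e addr0. Qed.

Lemma oppK a : ⊖⊖a = a.
Proof. by symmetry; apply: oppr_unique; rewrite addNr. Qed.

Lemma oppD a b : ⊖(a ⊕ b) = ⊖b ⊕ ⊖a.
Proof. by symmetry; apply: oppr_unique; rewrite -addA (addA B b) addrN add0r addrN. Qed.

Lemma oppr0 : ⊖z0 = z0.
Proof. by symmetry; apply: oppr_unique; rewrite add0r. Qed.

Lemma circr0 a : a ⊙ z0 = a.
Proof.
have compat := brace_compat B a z0 z0; rewrite add0r in compat.
have e : a ⊙ z0 ⊕ ⊖a = z0 by apply: (@addIr (a ⊙ z0)); rewrite add0r -compat.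
by rewrite -(addrNK (a ⊙ z0) a) e add0r.
Qed.

Lemma one_zero : Defs.one B = z0.
Proof. by rewrite -(circr0 (Defs.one B)) circ1r. Qed.

Lemma circE a b : a ⊙ b = a ⊕ L a b.
Proof. by rewrite /lambda addNKl. Qed.

Lemma lambda0 a : L a z0 = z0.
Proof. by rewrite /lambda circr0 addNr. Qed.

Lemma lambdaD a b c : L a (b ⊕ c) = L a b ⊕ L a c.
Proof. by rewrite /lambda brace_compat !addA. Qed.

Lemma lambdaN a b : L a (⊖b) = ⊖ L a b.
Proof. by apply: oppr_unique; rewrite -lambdaD addrN lambda0. Qed.

Lemma lambda_circ a b c : L (a ⊙ b) c = L a (L b c).
Proof.
rewrite {3}/lambda lambdaD lambdaN /lambda oppD oppK circA.
by rewrite -addA (addA B a) addrN add0r.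
Qed.

Lemma lambda_zero : L z0 =1 id.
Proof. by move=> c; rewrite /lambda -!one_zero circ1r one_zero oppr0 add0r. Qed.

Lemma lambdaK a : cancel (L a) (L a^-1).
Proof. by move=> c; rewrite -[RHS]lambda_zero -one_zero -(circVr B a) lambda_circ. Qed.

Lemma lambdaVK a : cancel (L a^-1) (L a).
Proof. by move=> c; rewrite -[RHS]lambda_zero -one_zero -(circrV B a) lambda_circ. Qed.

Lemma add_circE a b : a ⊕ b = a ⊙ L a^-1 b.
Proof. by rewrite circE lambdaVK. Qed.

Lemma star_eq0 a b : (star B a b == z0) = (L a b == b).
Proof.
apply/eqP/eqP => e; last by rewrite /star -/(L a b) e addrN.
by rewrite -(addrNK (L a b) b) -/(star B a b) e add0r.
Qed.

Lemma star_conj a b c : a ⊕ star B b c ⊕ ⊖a = ⊖ star B b a ⊕ star B b (a ⊕ c).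
Proof. by rewrite /star brace_compat !oppD !oppK -!addA !addNKl !addKl. Qed.

Lemma add_subgroupP (H : {set T}) :
  reflect [/\ z0 \in H, {in H &, forall a b, a ⊕ b \in H} & {in H, forall a, ⊖a \in H}]
          (is_add_subgroup B H).
Proof.
apply: (iffP and3P) => [[H0 /forallP HD /forallP HN] | [H0 HD HN]]; split=> //.
- by move=> a b Ha Hb; apply: (implyP (forallP (HD a) b)); rewrite Ha Hb.
- by move=> a; apply/implyP.
- by apply/forallP => a; apply/forallP => b; apply/implyP => /andP[]; apply: HD.
- by apply/forallP => a; apply/implyP; apply: HN.
Qed.

Lemma mem_add_gen (S : {set T}) x :
  reflect (forall H, is_add_subgroup B H -> S \subset H -> x \in H) (x \in add_gen B S).
Proof.
rewrite inE; apply: (iffP forallP) => [h H gH sH | h H].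
  by apply: (implyP (h H)); rewrite gH sH.
by apply/implyP => /andP[]; apply: h.
Qed.

Lemma add_gen_sub (S : {set T}) : S \subset add_gen B S.
Proof. by apply/subsetP => x xS; apply/mem_add_gen => H _ /subsetP; apply. Qed.

Lemma add_gen_subgroup (S : {set T}) : is_add_subgroup B (add_gen B S).
Proof.
apply/add_subgroupP; split.
- by apply/mem_add_gen => H /add_subgroupP[].
- move=> a b /mem_add_gen Ha /mem_add_gen Hb; apply/mem_add_gen => H gH sH.
  by case/add_subgroupP: (gH) => _ HD _; apply: HD; [apply: Ha | apply: Hb].
- move=> a /mem_add_gen Ha; apply/mem_add_gen => H gH sH.
  by case/add_subgroupP: (gH) => _ _ HN; apply: HN; apply: Ha.
Qed.

Lemma add_gen0 (S : {set T}) : z0 \in add_gen B S.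
Proof. by case/add_subgroupP: (add_gen_subgroup S). Qed.

Lemma add_genD (S : {set T}) a b :
  a \in add_gen B S -> b \in add_gen B S -> a ⊕ b \in add_gen B S.
Proof. by case/add_subgroupP: (add_gen_subgroup S) => _ + _; apply. Qed.

Lemma add_genN (S : {set T}) a : a \in add_gen B S -> ⊖a \in add_gen B S.
Proof. by case/add_subgroupP: (add_gen_subgroup S) => _ _; apply. Qed.

Lemma add_gen_ind (S : {set T}) (P : pred T) :
  P z0 -> (forall a b, P a -> P b -> P (a ⊕ b)) -> (forall a, P a -> P (⊖a)) ->
  {in S, forall x, P x} -> {in add_gen B S, forall x, P x}.
Proof.
move=> P0 PD PN PS x /mem_add_gen /(_ [set y | P y]); rewrite inE; apply.
  by apply/add_subgroupP; split=> [|a b|a]; rewrite !inE //; [apply: PD | apply: PN].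
by apply/subsetP => y yS; rewrite inE PS.
Qed.

Lemma ideal_gen_sub (S : {set T}) : S \subset ideal_gen B S.
Proof.
apply/subsetP => x xS; rewrite inE; apply/forallP => I.
by apply/implyP => /andP[_ /subsetP]; apply.
Qed.

Lemma star_in_B2 a b : star B a b \in B2 B.
Proof. by apply: (subsetP (add_gen_sub _)); apply: imset2_f; rewrite inE. Qed.

Lemma B2_conj a u : u \in B2 B -> a ⊕ u ⊕ ⊖a \in B2 B.
Proof.
move=> uB2.
apply: (add_gen_ind (P := fun u => a ⊕ u ⊕ ⊖a \in B2 B) _ _ _ _ uB2) => /=.
- by rewrite addr0 addrN add_gen0.
- move=> v w Hv Hw.
  have -> : a ⊕ (v ⊕ w) ⊕ ⊖a = a ⊕ v ⊕ ⊖a ⊕ (a ⊕ w ⊕ ⊖a).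
    by rewrite -!addA addKl.
  exact: add_genD.
- by move=> v /add_genN; rewrite !oppD oppK addA.
- move=> _ /imset2P[b c _ _ ->].
  by rewrite star_conj add_genD ?add_genN ?star_in_B2.
Qed.

Lemma B2_lambda a u : u \in B2 B -> L a u \in B2 B.
Proof. by move=> uB2; rewrite -(addrNK (L a u) u) add_genD ?star_in_B2. Qed.

Lemma B3_eq0P : B3 B = [set z0] <-> {in B2 B, forall c, L c =1 id}.
Proof.
split=> [B3E c cB2 b | B2triv].
  apply/eqP; rewrite -star_eq0 -in_set1 -B3E.
  by apply: (subsetP (add_gen_sub _)); apply: imset2_f; rewrite ?in_setT.
apply/eqP; rewrite eqEsubset sub1set add_gen0 andbT.
apply/subsetP; apply: add_gen_ind => [|a b|a|_ /imset2P[c b cB2 _ ->]]; rewrite ?inE //.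
- by move=> /eqP-> /eqP->; rewrite add0r.
- by move=> /eqP->; rewrite oppr0.
- by rewrite star_eq0 B2triv.
Qed.

Lemma B2_ideal : {in B2 B, forall c, L c =1 id} -> is_ideal B (B2 B).
Proof.
move=> B2triv; apply/and4P; split; first exact: add_gen_subgroup.
- by apply/forallP => a; apply/forallP => u; apply/implyP; apply: B2_conj.
- by apply/forallP => a; apply/forallP => u; apply/implyP; apply: B2_lambda.
apply/forallP => a; apply/forallP => u; apply/implyP => uB2.
(* As lambda_u = id, a o u o a^-1 = a + lambda_a(u) - a. *)
rewrite -circA (circE u) B2triv // brace_compat circrV one_zero addr0 (circE a u).
by apply: B2_conj; apply: B2_lambda.
Qed.

Lemma lambdaV_congr x y : L x =1 L y -> L x^-1 =1 L y^-1.
Proof. by move=> exy z; rewrite -{1}(lambdaVK y z) -exy lambdaK. Qed.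

Definition lambda_trivial (c : T) : bool := [forall z, L c z == z].

Lemma lambda_trivialP c : reflect (L c =1 id) (lambda_trivial c).
Proof. by apply: (iffP forallP) => h z; apply/eqP; apply: h. Qed.

Definition lambda_orbit_const (v : T) : bool := [forall d, [forall z, L (L d v) z == L v z]].

Lemma lambda_orbit_constP v : reflect (forall d, L (L d v) =1 L v) (lambda_orbit_const v).
Proof.
apply: (iffP forallP) => h d; last by apply/forallP => z; apply/eqP; apply: h.
by move=> z; apply/eqP; apply: (forallP (h d)).
Qed.

Lemma lambda_addE u v z : lambda_orbit_const v -> L (u ⊕ v) z = L u (L v z).
Proof. by move=> /lambda_orbit_constP vP; rewrite add_circE lambda_circ vP. Qed.

Lemma lambda_oppE u : lambda_orbit_const u -> L (⊖u) =1 L u^-1.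
Proof.
by move=> uP z; rewrite -{1}(lambdaVK u z) -lambda_addE // addNr lambda_zero.
Qed.

Lemma lambda_orbit_const_lambda d v : lambda_orbit_const v -> lambda_orbit_const (L d v).
Proof.
move=> /lambda_orbit_constP vP; apply/lambda_orbit_constP => d' z.
by rewrite -lambda_circ !vP.
Qed.

Lemma lambda_orbit_const_gen (X : {set T}) :
  add_gen B X = [set: T] -> (forall a, [set L a x | x in X] = X) ->
  {in X &, forall x y, L x =1 L y} -> forall v, lambda_orbit_const v.
Proof.
move=> genX lamX constX v; have : v \in add_gen B X by rewrite genX inE.
apply: add_gen_ind => [|u w uP wP|u uP|x xX]; apply/lambda_orbit_constP => d z.
- by rewrite lambda0.
- rewrite lambdaD (lambda_addE _ _ (lambda_orbit_const_lambda d wP)) lambda_addE //.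
  by rewrite (lambda_orbit_constP _ uP) (lambda_orbit_constP _ wP).
- rewrite lambdaN (lambda_oppE (lambda_orbit_const_lambda d uP)) lambda_oppE //.
  by apply: lambdaV_congr; apply/lambda_orbit_constP.
- by apply: constX => //; rewrite -(lamX d); apply: imset_f.
Qed.

Section LambdaHomomorphism.
Hypothesis lambda_orbit : forall v, lambda_orbit_const v.

Lemma lambda_star a b : L (star B a b) =1 id.
Proof.
move=> z; rewrite /star !lambda_addE // lambda_circ.
by rewrite !lambda_oppE // lambdaVK lambdaK.
Qed.

Lemma B2_lambda_trivial : {in B2 B, forall c, L c =1 id}.
Proof.
move=> c cB2; apply/lambda_trivialP; move: c cB2; apply: add_gen_ind.
- by apply/lambda_trivialP; apply: lambda_zero.
- move=> a b /lambda_trivialP Ha /lambda_trivialP Hb; apply/lambda_trivialP => z.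
  by rewrite lambda_addE // Hb Ha.
- move=> a /lambda_trivialP Ha; apply/lambda_trivialP => z.
  by rewrite lambda_oppE // -{1}(Ha z) lambdaK.
- by move=> _ /imset2P[a b _ _ ->]; apply/lambda_trivialP; apply: lambda_star.
Qed.

End LambdaHomomorphism.

Lemma lambda_eq_of_sub x y : L (sub B x y) =1 id -> L x =1 L y.
Proof.
move=> subP z; have xE : x = sub B x y ⊙ y by rewrite circE subP /sub addrNK.
by rewrite {1}xE lambda_circ subP.
Qed.

Lemma smallest_ideal_lambda_trivial (V : {set T}) :
  smallest_nonzero_ideal B V -> B3 B = [set z0] -> {in V, forall v, L v =1 id}.
Proof.
case/and3P=> _ _ /forallP minV /B3_eq0P B2triv v vV z.
have [B2E | B2nz] := eqVneq (B2 B) [set z0].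
  by apply/eqP; rewrite -star_eq0 -in_set1 -B2E star_in_B2.
have sVB2 : V \subset B2 B by apply: (implyP (minV _)); rewrite B2_ideal // B2nz.
exact: B2triv (subsetP sVB2 v vV) z.
Qed.

End SkewBrace.

Theorem mainTheorem10 (T : finType) (B : skew_brace T) (X : {set T}) :
  3 <= #|X| ->
  (forall a : T, [set lambda B a x | x in X] = X) ->
  (forall a : T, [set sigma B a x | x in X] = X) ->
  add_gen B X = [set: T] ->
  smallest_nonzero_ideal B (ideal_gen B [set sub B x y | x in X, y in X]) ->
  quotient_trivial B (ideal_gen B [set sub B x y | x in X, y in X]) ->
  quotient_cyclic_type B (ideal_gen B [set sub B x y | x in X, y in X]) ->
  (forall x y, x \in X -> y \in X ->
     exists a b, [/\ a \in ideal_gen B [set sub B x y | x in X, y in X],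
                     b \in ideal_gen B [set sub B x y | x in X, y in X] &
                     sigma B a (lambda B b x) = y]) ->
  (B3 B = [set zero B] <->
     (forall x y, x \in X -> y \in X -> forall z, lambda B x z = lambda B y z))
  /\
  (B3 B = [set zero B] ->
     forall v, v \in ideal_gen B [set sub B x y | x in X, y in X] ->
       forall z, lambda B v z = z).
Proof.
move=> _ lamX _ genX smallV _ _ _.
have V_triv := smallest_ideal_lambda_trivial smallV.
split=> //; split=> [B3E x y xX yX | constX].
  apply: lambda_eq_of_sub; apply: (V_triv B3E).
  by apply: (subsetP (ideal_gen_sub B _)); apply: imset2_f.
by apply/B3_eq0P; apply: B2_lambda_trivial; apply: lambda_orbit_const_gen genX lamX _.
Qed.
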